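(* With $P(X)=\prod_{i=1}^n(X-x_i)=\sum_{i=0}^n a_iX^i$ ($a_n=1$), set $a_i=0$ for $i>n$ and $\alpha_{i,j}=(i+1)a_{i+1}a_j$. Then, as polynomial identities in $X,Y$, $$\Gamma_{\mathbb E}\big(P(X),P(Y)\big)=\sum_{i,j}\Gamma_{\mathbb E}(a_i,a_j)X^iY^j=\frac{P'(X)P(Y)-P'(Y)P(X)}{Y-X}=\sum_{i\ne j}\alpha_{i,j}\,\frac{X^iY^j-X^jY^i}{Y-X}.$$ Moreover, the functions $G^{kp}=\Gamma_{\mathbb E}(a_k,a_p)$ ($0\le k,p\le n-1$) are polynomials in $(a_0,\dots,a_{n-1})$, and regarding them as such, for every $p\in\{0,\dots,n-1\}$, $$\sum_{k=0}^{n-1}\partial_{a_k}\Gamma_{\mathbb E}(a_k,a_p)=-\tfrac12(p+1)(p+2)\,a_{p+2}.$$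
   Context: $\Gamma_{\mathbb E}(f,g)=\sum_i\partial_{x_i}f\,\partial_{x_i}g$ is the Euclidean carré du champ on $\mathbb{R}^n$; the $a_i$ are functions of $x=(x_1,\dots,x_n)$. *)

From Stdlib Require Import Reals Lra Lia Classical ClassicalEpsilon.
Open Scope R_scope.

(* Points of R^n are represented as x : nat -> R; only the coordinates
   x 0, ..., x (n-1) (the paper's x_1, ..., x_n) are used. *)

Fixpoint rsum (n : nat) (F : nat -> R) : R :=
  match n with O => 0 | S m => rsum m F + F m end.
Fixpoint rprod (n : nat) (F : nat -> R) : R :=
  match n with O => 1 | S m => rprod m F * F m end.

Definition upd (x : nat -> R) (l : nat) (t : R) : nat -> R :=
  fun k => if Nat.eqb k l then t else x k.

Definition has_partial (f : (nat -> R) -> R) (l : nat) (x : nat -> R) (v : R)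
  : Prop := derivable_pt_lim (fun t => f (upd x l t)) (x l) v.

(* the partial derivative d f / d x_l at x (0 if it does not exist) *)
Definition partial (f : (nat -> R) -> R) (l : nat) (x : nat -> R) : R :=
  match excluded_middle_informative (exists v, has_partial f l x v) with
  | left H => proj1_sig (constructive_indefinite_description _ H)
  | right _ => 0
  end.

(* ordinary derivative of a one-variable real function (0 if none) *)
Definition deriv1 (f : R -> R) (X : R) : R :=
  match excluded_middle_informative (exists v, derivable_pt_lim f X v) with
  | left H => proj1_sig (constructive_indefinite_description _ H)
  | right _ => 0
  end.

Definition GammaE (n : nat) (f g : (nat -> R) -> R) (x : nat -> R) : R :=
  rsum n (fun l => partial f l x * partial g l x).

Definition Ppoly (n : nat) (x : nat -> R) (X : R) : R :=
  rprod n (fun i => X - x i).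

(* coef n x k = a_k = coefficient of X^k in prod_{i<n} (X - x_i),
   computed by multiplying successively by (X - x_m);
   in particular a_n = 1 and a_k = 0 for k > n. *)
Fixpoint coef (n : nat) (x : nat -> R) (k : nat) : R :=
  match n with
  | O => match k with O => 1 | S _ => 0 end
  | S m => match k with O => 0 | S k' => coef m x k' end - x m * coef m x k
  end.

Definition alpha (n : nat) (x : nat -> R) (i j : nat) : R :=
  INR (i + 1) * coef n x (i + 1) * coef n x j.

Inductive is_poly (n : nat) : ((nat -> R) -> R) -> Prop :=
| poly_const (c : R) : is_poly n (fun _ => c)
| poly_var (i : nat) : (i < n)%nat -> is_poly n (fun a => a i)
| poly_add (f g : (nat -> R) -> R) :
    is_poly n f -> is_poly n g -> is_poly n (fun a => f a + g a)
| poly_mul (f g : (nat -> R) -> R) :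
    is_poly n f -> is_poly n g -> is_poly n (fun a => f a * g a).

Definition avec (n : nat) (x : nat -> R) : nat -> R :=
  fun i => if Nat.ltb i n then coef n x i else 0.

Definition aext (n : nat) (a : nat -> R) (i : nat) : R :=
  if Nat.ltb i n then a i else if Nat.eqb i n then 1 else 0.

(* Part 1.  Each a_k, hence P(X), is affine in every single root x_l, so
   Gamma(P(X), P(Y)) = sum_(i,j) Gamma(a_i, a_j) X^i Y^j by bilinearity.  Moreover
   d P(X) / d x_l = - Q_l(X) with Q_l = P / (X - x_l), and P' = sum_l Q_l, which gives
   (Y - X) Gamma(P(X), P(Y)) = P'(X) P(Y) - P'(Y) P(X); expanding P and P' in coefficients
   yields the alpha form.

   Part 2.  Comparing coefficients of X^k Y^p in the last two identities gives the recursion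
   G^(k,p-1) - G^(k-1,p) = alpha_(k,p) - alpha_(p,k); unrolling it along anti-diagonals
   produces an explicit polynomial Gpoly in (a_0, ..., a_(n-1)).

   Part 3.  Any polynomial agreeing with G^(kp) on coefficient vectors of real-rooted
   polynomials equals Gpoly, because these vectors are Zariski dense (induction on n,
   dividing by a root of B(X) - B(t)).  In Gpoly the variable a_k of G^(kp) occurs only
   linearly, with coefficient a multiple of a_(p+2), and summing these slopes over k gives
   the divergence identity. *)

From Stdlib Require Import Reals.
From Stdlib Require Import Lra Lia ClassicalEpsilon FunctionalExtensionality.
Open Scope R_scope.

Ltac nat_tests :=
  repeat match goal with
  | |- context [Nat.eqb ?a ?b] => destruct (Nat.eqb_spec a b)
  | |- context [Nat.ltb ?a ?b] => destruct (Nat.ltb_spec a b)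
  | |- context [Nat.leb ?a ?b] => destruct (Nat.leb_spec a b)
  end; try lia; try reflexivity.

Lemma rsum_ext n F G : (forall i, (i < n)%nat -> F i = G i) -> rsum n F = rsum n G.
Proof.
  induction n as [|n IH]; intros H; simpl; auto.
  rewrite IH, (H n) by (intros; try apply H; lia); reflexivity.
Qed.

Lemma rprod_ext n F G : (forall i, (i < n)%nat -> F i = G i) -> rprod n F = rprod n G.
Proof.
  induction n as [|n IH]; intros H; simpl; auto.
  rewrite IH, (H n) by (intros; try apply H; lia); reflexivity.
Qed.

Lemma rsum_plus n F G : rsum n (fun i => F i + G i) = rsum n F + rsum n G.
Proof. induction n as [|n IH]; simpl; [lra | rewrite IH; lra]. Qed.

Lemma rsum_minus n F G : rsum n (fun i => F i - G i) = rsum n F - rsum n G.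
Proof. induction n as [|n IH]; simpl; [lra | rewrite IH; lra]. Qed.

Lemma rsum_scal_l n c F : rsum n (fun i => c * F i) = c * rsum n F.
Proof. induction n as [|n IH]; simpl; [lra | rewrite IH; lra]. Qed.

Lemma rsum_scal_r n c F : rsum n (fun i => F i * c) = rsum n F * c.
Proof. induction n as [|n IH]; simpl; [lra | rewrite IH; lra]. Qed.

Lemma rsum_zero n F : (forall i, (i < n)%nat -> F i = 0) -> rsum n F = 0.
Proof.
  induction n as [|n IH]; intros H; simpl; auto.
  rewrite IH, (H n) by (intros; try apply H; lia); ring.
Qed.

Lemma rsum_trunc N M F :
  (N <= M)%nat -> (forall i, (N <= i < M)%nat -> F i = 0) -> rsum M F = rsum N F.
Proof.
  induction M as [|M IH]; intros HNM H.
  - replace N with 0%nat by lia; reflexivity.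
  - destruct (Nat.eq_dec N (S M)) as [-> | HN]; [reflexivity |].
    simpl; rewrite IH, (H M) by (intros; try apply H; lia); ring.
Qed.

Lemma rsum_swap n m F :
  rsum n (fun i => rsum m (fun j => F i j)) = rsum m (fun j => rsum n (fun i => F i j)).
Proof.
  induction n as [|n IH]; simpl.
  - symmetry; apply rsum_zero; auto.
  - rewrite IH, <- rsum_plus; reflexivity.
Qed.

Lemma rsum_mult n m F G :
  rsum n F * rsum m G = rsum n (fun i => rsum m (fun j => F i * G j)).
Proof.
  rewrite <- rsum_scal_r; apply rsum_ext; intros.
  rewrite <- rsum_scal_l; reflexivity.
Qed.

Lemma rsum_first n F : rsum (S n) F = F 0%nat + rsum n (fun i => F (S i)).
Proof. induction n as [|n IH]; simpl in *; [lra | rewrite IH; lra]. Qed.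

Lemma rsum_delta N m F :
  rsum N (fun u => if Nat.eqb u m then F u else 0) = if Nat.ltb m N then F m else 0.
Proof.
  induction N as [|N IH]; simpl; auto.
  rewrite IH; nat_tests; subst; ring.
Qed.

Lemma rsum_const N v : rsum N (fun _ => v) = INR N * v.
Proof. induction N as [|N IH]; simpl rsum; [simpl; ring | rewrite IH, S_INR; ring]. Qed.

Lemma rsum_INR N : rsum N INR = INR N * (INR N - 1) / 2.
Proof. induction N as [|N IH]; simpl rsum; [simpl; field | rewrite IH, S_INR; field]. Qed.

Lemma deriv1_eq f X v : derivable_pt_lim f X v -> deriv1 f X = v.
Proof.
  intros H; unfold deriv1; destruct excluded_middle_informative as [e | e].
  - destruct constructive_indefinite_description as [w Hw]; simpl.
    eapply uniqueness_limite; eauto.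
  - exfalso; eauto.
Qed.

Lemma partial_eq f l x v : has_partial f l x v -> partial f l x = v.
Proof.
  intros H; unfold partial; destruct excluded_middle_informative as [e | e].
  - destruct constructive_indefinite_description as [w Hw]; simpl.
    eapply uniqueness_limite; eauto.
  - exfalso; eauto.
Qed.

Lemma derivable_pt_lim_ext f g x l :
  (forall y, f y = g y) -> derivable_pt_lim f x l -> derivable_pt_lim g x l.
Proof. intros H; replace g with f by (apply functional_extensionality; auto); auto. Qed.

Lemma partial_affine f l x A B :
  (forall t, f (upd x l t) = A + t * B) -> partial f l x = B.
Proof.
  intros H; apply partial_eq; unfold has_partial.
  apply derivable_pt_lim_ext with (fun t => A + t * B); [intros; symmetry; apply H |].
  assert (D : derivable_pt_lim (fun t => A + t * B) (x l) (0 + (1 * B + x l * 0))).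
  { apply derivable_pt_lim_plus; [apply derivable_pt_lim_const |].
    apply (derivable_pt_lim_mult (fun t => t) (fun _ => B));
      [apply derivable_pt_lim_id | apply derivable_pt_lim_const]. }
  replace (0 + (1 * B + x l * 0)) with B in D by ring; exact D.
Qed.

Lemma upd_same x l t : upd x l t l = t.
Proof. unfold upd; rewrite Nat.eqb_refl; reflexivity. Qed.

Lemma upd_other x l t i : i <> l -> upd x l t i = x i.
Proof. intros H; unfold upd; apply Nat.eqb_neq in H; rewrite H; reflexivity. Qed.

Lemma upd_id x l : upd x l (x l) = x.
Proof. apply functional_extensionality; intros i; unfold upd; nat_tests; subst; auto. Qed.

Definition peval (N : nat) (c : nat -> R) (X : R) : R := rsum N (fun i => c i * X ^ i).

(* coefficients of X * C(X) and of C'(X) *)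
Definition pshift (c : nat -> R) (i : nat) : R := match i with O => 0 | S i' => c i' end.
Definition pderiv (c : nat -> R) (i : nat) : R := INR (i + 1) * c (i + 1)%nat.

Lemma peval_shift N c X : X * peval N c X = peval (S N) (pshift c) X.
Proof.
  unfold peval; rewrite rsum_first; simpl.
  rewrite <- rsum_scal_l, Rmult_0_l, Rplus_0_l; apply rsum_ext; intros; simpl; ring.
Qed.

Lemma derivable_peval m c X :
  derivable_pt_lim (peval (S m) c) X (peval m (pderiv c) X).
Proof.
  induction m as [|m IH].
  - apply derivable_pt_lim_ext with (fun _ => c 0%nat);
      [intros; unfold peval; simpl; ring | apply derivable_pt_lim_const].
  - assert (D := derivable_pt_lim_plus _ _ X _ _ IH
                   (derivable_pt_lim_scal (fun y => y ^ S m) (c (S m)) X _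
                      (derivable_pt_lim_pow X (S m)))).
    replace (peval (S m) (pderiv c) X)
      with (peval m (pderiv c) X + c (S m) * (INR (S m) * X ^ pred (S m))).
    + exact D.
    + unfold peval, pderiv; simpl rsum; simpl pred.
      replace (m + 1)%nat with (S m) by lia; ring.
Qed.

Lemma derivable_pt_lim_locally_zero f lo hi X :
  lo < X < hi -> (forall y, lo < y < hi -> f y = 0) -> derivable_pt_lim f X 0.
Proof.
  intros HX H eps Heps.
  assert (Hd : 0 < Rmin (X - lo) (hi - X)) by (apply Rmin_pos; lra).
  exists (mkposreal _ Hd); intros h Hh Hlt; simpl in Hlt.
  assert (h0 : Rabs h < X - lo) by (eapply Rlt_le_trans; [apply Hlt | apply Rmin_l]).
  assert (h1 : Rabs h < hi - X) by (eapply Rlt_le_trans; [apply Hlt | apply Rmin_r]).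
  apply Rabs_def2 in h0; apply Rabs_def2 in h1.
  rewrite (H (X + h)), (H X) by lra.
  replace ((0 - 0) / h - 0) with 0 by (field; lra); rewrite Rabs_R0; exact Heps.
Qed.

(* Identity theorem: a polynomial vanishing on an open interval has zero coefficients.
   By induction on the length: its derivative vanishes there too. *)
Lemma peval_zero_interval M : forall c lo hi, lo < hi ->
  (forall y, lo < y < hi -> peval M c y = 0) -> forall i, (i < M)%nat -> c i = 0.
Proof.
  induction M as [|M IH]; intros c lo hi Hlh H i Hi; [lia |].
  assert (Hhigh : forall j, (j < M)%nat -> c (S j) = 0).
  { intros j Hj.
    assert (Hd : pderiv c j = 0).
    { apply (IH _ lo hi Hlh); auto; intros y Hy.
      apply (uniqueness_limite (peval (S M) c) y); [apply derivable_peval |].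
      apply (derivable_pt_lim_locally_zero _ lo hi); auto. }
    unfold pderiv in Hd; replace (j + 1)%nat with (S j) in Hd by lia.
    apply Rmult_integral in Hd; destruct Hd as [Hd | Hd]; auto.
    exfalso; apply (not_0_INR (S j)); [lia | rewrite <- Hd; f_equal; lia]. }
  destruct i as [|i]; [| apply Hhigh; lia].
  assert (Hmid := H ((lo + hi) / 2) ltac:(lra)).
  unfold peval in Hmid; rewrite rsum_first, rsum_zero in Hmid;
    [simpl in Hmid; lra | intros j Hj; rewrite Hhigh by lia; ring].
Qed.

Definition beval (M : nat) (e : nat -> nat -> R) (X Y : R) : R :=
  rsum M (fun k => rsum M (fun p => e k p * X ^ k * Y ^ p)).

Lemma bivariate_zero M e :
  (forall X Y, beval M e X Y = 0) ->
  forall k p, (k < M)%nat -> (p < M)%nat -> e k p = 0.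
Proof.
  intros H k p Hk Hp.
  assert (Hrow : forall Y k, (k < M)%nat -> peval M (e k) Y = 0).
  { intros Y; apply (peval_zero_interval M _ 0 1); [lra |]; intros X _.
    rewrite <- (H X Y); unfold peval, beval; apply rsum_ext; intros.
    rewrite Rmult_comm, <- rsum_scal_l; apply rsum_ext; intros; ring. }
  apply (peval_zero_interval M (e k) 0 1); [lra | intros; apply Hrow |]; auto.
Qed.

Lemma beval_minus M e f X Y :
  beval M e X Y - beval M f X Y = beval M (fun k p => e k p - f k p) X Y.
Proof.
  unfold beval; rewrite <- rsum_minus; apply rsum_ext; intros.
  rewrite <- rsum_minus; apply rsum_ext; intros; ring.
Qed.

Lemma beval_transpose M e X Y : beval M e X Y = beval M (fun k p => e p k) Y X.
Proof. unfold beval; rewrite rsum_swap; do 2 (apply rsum_ext; intros); ring. Qed.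

(* Multiplication by Y shifts the columns; no degree is lost when the last column is zero. *)
Lemma beval_mul_Y m e X Y : (forall k, e k m = 0) ->
  Y * beval (S m) e X Y = beval (S m) (fun k p => pshift (e k) p) X Y.
Proof.
  intros Hlast; unfold beval; rewrite <- rsum_scal_l; apply rsum_ext; intros k _.
  assert (Hrow : Y * peval (S m) (e k) Y = peval (S m) (pshift (e k)) Y).
  { rewrite peval_shift; unfold peval.
    change (rsum (S (S m)) ?F) with (rsum (S m) F + F (S m)); cbv beta.
    simpl pshift at 2; rewrite Hlast; ring. }
  transitivity (X ^ k * (Y * peval (S m) (e k) Y));
    [| rewrite Hrow]; unfold peval; rewrite <- !rsum_scal_l; apply rsum_ext; intros; ring.
Qed.

Lemma beval_mul_X m e X Y : (forall p, e m p = 0) ->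
  X * beval (S m) e X Y = beval (S m) (fun k p => pshift (fun k => e k p) k) X Y.
Proof.
  intros Hlast; rewrite beval_transpose, beval_mul_Y by auto.
  rewrite beval_transpose; reflexivity.
Qed.

Lemma coef_ext n x y k : (forall i, (i < n)%nat -> x i = y i) -> coef n x k = coef n y k.
Proof.
  revert k; induction n as [|n IH]; intros k H; simpl; auto.
  destruct k; rewrite !IH, H by (intros; try apply H; lia); reflexivity.
Qed.

Lemma coef_high n x k : (n < k)%nat -> coef n x k = 0.
Proof.
  revert k; induction n as [|n IH]; intros k H; simpl; destruct k; try lia; auto.
  rewrite !IH by lia; ring.
Qed.

Lemma coef_n n x : coef n x n = 1.
Proof. induction n as [|n IH]; simpl; auto. rewrite IH, coef_high by lia; ring. Qed.

Lemma coef_S n x k : coef (S n) x k = pshift (coef n x) k - x n * coef n x k.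
Proof. reflexivity. Qed.

Lemma Ppoly_coef n x X : Ppoly n x X = peval (S n) (coef n x) X.
Proof.
  induction n as [|n IH]; [unfold Ppoly, peval; simpl; ring |].
  unfold Ppoly in *; simpl rprod; rewrite IH.
  transitivity (peval (S (S n)) (pshift (coef n x)) X - x n * peval (S (S n)) (coef n x) X).
  - assert (Hlast : peval (S (S n)) (coef n x) X = peval (S n) (coef n x) X).
    { unfold peval; change (rsum (S (S n)) ?F) with (rsum (S n) F + F (S n)); cbv beta.
      rewrite (coef_high n x (S n)) by lia; ring. }
    rewrite <- peval_shift, Hlast; ring.
  - unfold peval; rewrite <- rsum_scal_l, <- rsum_minus.
    apply rsum_ext; intros; rewrite coef_S; ring.
Qed.

Lemma coef_affine n x l i t :
  coef n (upd x l t) i =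
  coef n (upd x l 0) i + t * (coef n (upd x l 1) i - coef n (upd x l 0) i).
Proof.
  revert i; induction n as [|n IH]; intros i; simpl; [ring |].
  destruct (Nat.eq_dec n l) as [-> | Hne].
  - assert (Hc : forall s j, coef l (upd x l s) j = coef l x j)
      by (intros; apply coef_ext; intros; apply upd_other; lia).
    rewrite !upd_same; destruct i; rewrite !Hc; ring.
  - rewrite !upd_other by auto.
    destruct i; [rewrite (IH 0%nat) | rewrite (IH i), (IH (S i))]; ring.
Qed.

Definition dcoef n x l i : R := coef n (upd x l 1) i - coef n (upd x l 0) i.

Lemma partial_coef n x l i : partial (fun z => coef n z i) l x = dcoef n x l i.
Proof. apply (partial_affine _ _ _ (coef n (upd x l 0) i)); intros; apply coef_affine. Qed.

(* a_n = 1 and a_p = 0 for p > n do not depend on the roots. *)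
Lemma dcoef_high n x l p : (n <= p)%nat -> dcoef n x l p = 0.
Proof.
  intros H; unfold dcoef; destruct (Nat.eq_dec p n) as [-> | Hne].
  - rewrite !coef_n; ring.
  - rewrite !coef_high by lia; ring.
Qed.

Lemma partial_Ppoly n x l X :
  partial (fun z => Ppoly n z X) l x = peval (S n) (dcoef n x l) X.
Proof.
  apply (partial_affine _ _ _ (peval (S n) (coef n (upd x l 0)) X)); intros t.
  rewrite Ppoly_coef; unfold peval; rewrite <- rsum_scal_l, <- rsum_plus.
  apply rsum_ext; intros; rewrite coef_affine; unfold dcoef; ring.
Qed.

Lemma Gamma_coef n x i j :
  GammaE n (fun z => coef n z i) (fun z => coef n z j) x
  = rsum n (fun l => dcoef n x l i * dcoef n x l j).
Proof. unfold GammaE; apply rsum_ext; intros; rewrite !partial_coef; reflexivity. Qed.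

Lemma Gamma_Ppoly_expand n x X Y :
  GammaE n (fun z => Ppoly n z X) (fun z => Ppoly n z Y) x
  = rsum (S n) (fun i => rsum (S n) (fun j =>
      GammaE n (fun z => coef n z i) (fun z => coef n z j) x * X ^ i * Y ^ j)).
Proof.
  unfold GammaE at 1.
  rewrite (rsum_ext n _ (fun l => rsum (S n) (fun i => rsum (S n) (fun j =>
             (dcoef n x l i * X ^ i) * (dcoef n x l j * Y ^ j)))))
    by (intros; rewrite !partial_Ppoly; apply rsum_mult).
  rewrite rsum_swap; apply rsum_ext; intros i _.
  rewrite rsum_swap; apply rsum_ext; intros j _.
  rewrite Gamma_coef, <- !rsum_scal_r; apply rsum_ext; intros; ring.
Qed.

Definition cofactor n x l X : R := rprod n (fun i => if Nat.eqb i l then 1 else X - x i).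

Lemma rprod_skip_last n F : rprod n (fun i => if Nat.eqb i n then 1 else F i) = rprod n F.
Proof. apply rprod_ext; intros i Hi; nat_tests. Qed.

Lemma Ppoly_cofactor n x l X : (l < n)%nat -> Ppoly n x X = cofactor n x l X * (X - x l).
Proof.
  induction n as [|n IH]; intros H; [lia |].
  unfold Ppoly, cofactor in *; simpl.
  destruct (Nat.eq_dec l n) as [-> | Hne].
  - rewrite Nat.eqb_refl, rprod_skip_last; ring.
  - rewrite IH by lia; nat_tests; ring.
Qed.

Lemma cofactor_upd n x l t X : cofactor n (upd x l t) l X = cofactor n x l X.
Proof.
  unfold cofactor; apply rprod_ext; intros i _; nat_tests.
  rewrite upd_other; auto.
Qed.

Lemma partial_Ppoly_cofactor n x l X :
  (l < n)%nat -> partial (fun z => Ppoly n z X) l x = - cofactor n x l X.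
Proof.
  intros H; apply (partial_affine _ _ _ (cofactor n x l X * X)); intros t.
  rewrite (Ppoly_cofactor n _ l), cofactor_upd, upd_same by auto; ring.
Qed.

Lemma derivable_Ppoly n x X :
  derivable_pt_lim (Ppoly n x) X (rsum n (fun l => cofactor n x l X)).
Proof.
  induction n as [|n IH]; [apply derivable_pt_lim_const |].
  assert (D := derivable_pt_lim_mult (Ppoly n x) (fun y => y - x n) X _ _ IH
                 (derivable_pt_lim_minus _ _ X _ _ (derivable_pt_lim_id X)
                    (derivable_pt_lim_const (x n) X))).
  replace (rsum (S n) (fun l => cofactor (S n) x l X))
    with (rsum n (fun l => cofactor n x l X) * (X - x n) + Ppoly n x X * (1 - 0)).
  - exact D.
  - simpl; rewrite <- rsum_scal_r; f_equal.
    + apply rsum_ext; intros i Hi; unfold cofactor; simpl; nat_tests.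
    + unfold cofactor, Ppoly; simpl; rewrite Nat.eqb_refl, rprod_skip_last; ring.
Qed.

(* Second identity, without division: (Y - X) Gamma(P(X), P(Y)) = P'(X) P(Y) - P'(Y) P(X). *)
Lemma Gamma_Ppoly_wronskian n x X Y :
  (Y - X) * GammaE n (fun z => Ppoly n z X) (fun z => Ppoly n z Y) x
  = deriv1 (Ppoly n x) X * Ppoly n x Y - deriv1 (Ppoly n x) Y * Ppoly n x X.
Proof.
  rewrite !(deriv1_eq _ _ _ (derivable_Ppoly n x _)).
  unfold GammaE; rewrite <- rsum_scal_l, <- !rsum_scal_r, <- rsum_minus.
  apply rsum_ext; intros l Hl.
  rewrite !partial_Ppoly_cofactor, (Ppoly_cofactor n x l X), (Ppoly_cofactor n x l Y) by auto.
  ring.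
Qed.

Lemma deriv_Ppoly_coef n x X : deriv1 (Ppoly n x) X = peval (S n) (pderiv (coef n x)) X.
Proof.
  apply deriv1_eq.
  apply derivable_pt_lim_ext with (peval (S n) (coef n x)); [intros; symmetry; apply Ppoly_coef |].
  replace (peval (S n) (pderiv (coef n x)) X) with (peval n (pderiv (coef n x)) X);
    [apply derivable_peval |].
  unfold peval, pderiv; simpl rsum; rewrite coef_high by lia; ring.
Qed.

Lemma alpha_expand n x X Y :
  rsum (S n) (fun i => rsum (S n) (fun j => alpha n x i j * (X ^ i * Y ^ j - X ^ j * Y ^ i)))
  = deriv1 (Ppoly n x) X * Ppoly n x Y - deriv1 (Ppoly n x) Y * Ppoly n x X.
Proof.
  rewrite !deriv_Ppoly_coef, !Ppoly_coef; unfold peval; rewrite !rsum_mult, <- rsum_minus.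
  apply rsum_ext; intros; rewrite <- rsum_minus; apply rsum_ext; intros.
  unfold alpha, pderiv; ring.
Qed.

Definition walpha (c : nat -> R) (i j : nat) : R := pderiv c i * c j - pderiv c j * c i.

Lemma beval_walpha n x X Y :
  beval (S n) (walpha (coef n x)) X Y
  = rsum (S n) (fun i => rsum (S n) (fun j => alpha n x i j * (X ^ i * Y ^ j - X ^ j * Y ^ i))).
Proof.
  unfold beval, walpha.
  transitivity (rsum (S n) (fun k => rsum (S n) (fun p => alpha n x k p * X ^ k * Y ^ p))
                - rsum (S n) (fun k => rsum (S n) (fun p => alpha n x p k * X ^ k * Y ^ p))).
  - rewrite <- rsum_minus; apply rsum_ext; intros; rewrite <- rsum_minus.
    apply rsum_ext; intros; unfold alpha, pderiv; ring.
  - rewrite (rsum_swap _ _ (fun k p => alpha n x p k * X ^ k * Y ^ p)), <- rsum_minus.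
    apply rsum_ext; intros; rewrite <- rsum_minus; apply rsum_ext; intros; ring.
Qed.

(* G^(kp) = Gamma(a_k, a_p) as a function of the roots; it vanishes when k >= n or p >= n,
   since a_n = 1 and a_k = 0 for k > n are constants. *)
Definition Gcoef n x k p : R := GammaE n (fun z => coef n z k) (fun z => coef n z p) x.

Lemma Gcoef_high_l n x k p : (n <= k)%nat -> Gcoef n x k p = 0.
Proof.
  intros H; unfold Gcoef; rewrite Gamma_coef; apply rsum_zero; intros.
  rewrite (dcoef_high n x _ k) by auto; ring.
Qed.

Lemma Gcoef_high_r n x k p : (n <= p)%nat -> Gcoef n x k p = 0.
Proof.
  intros H; unfold Gcoef; rewrite Gamma_coef; apply rsum_zero; intros.
  rewrite (dcoef_high n x _ p) by auto; ring.
Qed.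


(* Comparing the coefficients of X^k Y^p in
   (Y - X) sum_(k,p) G^(kp) X^k Y^p = sum_(i,j) alpha_(i,j) (X^i Y^j - X^j Y^i)
   gives G^(k,p-1) - G^(k-1,p) = walpha a k p. *)
Lemma Gcoef_recursion n x k p : (k < S n)%nat -> (p < S n)%nat ->
  pshift (Gcoef n x k) p - pshift (fun k => Gcoef n x k p) k = walpha (coef n x) k p.
Proof.
  intros Hk Hp; apply Rminus_diag_uniq; revert k p Hk Hp.
  apply (bivariate_zero (S n) (fun k p =>
    pshift (Gcoef n x k) p - pshift (fun k => Gcoef n x k p) k - walpha (coef n x) k p)).
  intros X Y.
  rewrite <- !beval_minus, <- beval_mul_Y, <- beval_mul_X
    by (intros; first [apply Gcoef_high_r; lia | apply Gcoef_high_l; lia]).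
  assert (Halpha : beval (S n) (walpha (coef n x)) X Y
                   = (Y - X) * beval (S n) (Gcoef n x) X Y).
  { rewrite beval_walpha, alpha_expand, <- Gamma_Ppoly_wronskian, Gamma_Ppoly_expand.
    reflexivity. }
  rewrite Halpha; ring.
Qed.

(* Unrolling the recursion along the anti-diagonal k + p = const:
   G^(kp) = sum_(u <= min(k,p)) walpha a u (k + p + 1 - u). *)
Definition Gformula (c : nat -> R) (k p : nat) : R :=
  rsum (S p) (fun u => if Nat.leb u k then walpha c u (k + p + 1 - u) else 0).

Lemma Gformula_step c k p : Gformula c (S k) p = Gformula c k (S p) + walpha c (S k) (S p).
Proof.
  unfold Gformula.
  rewrite (rsum_ext (S p) _ (fun u => (if Nat.leb u k then walpha c u (k + S p + 1 - u) else 0)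
             + (if Nat.eqb u (S k) then walpha c u (S k + p + 1 - u) else 0))).
  2:{ intros u _; nat_tests; subst; try ring.
      replace (k + S p + 1 - u)%nat with (S k + p + 1 - u)%nat by lia; ring. }
  rewrite rsum_plus, rsum_delta; change (rsum (S (S p)) ?F) with (rsum (S p) F + F (S p)).
  cbv beta; nat_tests.
  - replace (S k + p + 1 - S k)%nat with (S p) by lia; ring.
  - replace (k + S p + 1 - S p)%nat with (S k) by lia; unfold walpha; ring.
  - replace k with p by lia; unfold walpha; ring.
Qed.

Lemma Gformula_high n x k p : (n <= p)%nat -> Gformula (coef n x) k p = 0.
Proof.
  intros H; unfold Gformula; apply rsum_zero; intros u Hu; nat_tests.
  unfold walpha, pderiv; rewrite !(coef_high n x (k + p + 1 - u)),
    (coef_high n x (k + p + 1 - u + 1)) by lia; ring.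
Qed.

Lemma Gcoef_formula n x k p : (k < n)%nat -> Gcoef n x k p = Gformula (coef n x) k p.
Proof.
  revert p; induction k as [|k IH]; intros p Hk;
    (destruct (Compare_dec.le_lt_dec n p) as [Hp | Hp];
     [rewrite Gcoef_high_r, Gformula_high by auto; reflexivity |]).
  - assert (Hrec := Gcoef_recursion n x 0 (S p) ltac:(lia) ltac:(lia)); simpl in Hrec.
    unfold Gformula; rewrite rsum_first, rsum_zero by (intros; nat_tests).
    simpl Nat.leb; cbv iota beta; replace (0 + p + 1 - 0)%nat with (S p) by lia; lra.
  - assert (Hrec := Gcoef_recursion n x (S k) (S p) ltac:(lia) ltac:(lia)); simpl in Hrec.
    rewrite Gformula_step, <- IH by lia; lra.
Qed.

Lemma is_poly_ext n f g : is_poly n f -> (forall a, f a = g a) -> is_poly n g.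
Proof. intros H E; replace g with f by (apply functional_extensionality; auto); exact H. Qed.

Lemma is_poly_sub n f g : is_poly n f -> is_poly n g -> is_poly n (fun a => f a - g a).
Proof.
  intros Hf Hg; apply (is_poly_ext n (fun a => f a + (fun _ => -1) a * g a));
    [apply poly_add, poly_mul; auto; apply poly_const | intros; simpl; ring].
Qed.

Lemma is_poly_rsum n N F : (forall u, is_poly n (F u)) -> is_poly n (fun a => rsum N (fun u => F u a)).
Proof.
  intros H; induction N as [|N IH]; simpl; [apply poly_const |].
  apply (poly_add n (fun a => rsum N (fun u => F u a)) (F N)); auto.
Qed.

Lemma is_poly_aext n i : is_poly n (fun a => aext n a i).
Proof.
  unfold aext; destruct (Nat.ltb_spec i n); [apply poly_var; auto |].
  destruct (Nat.eqb i n); apply poly_const.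
Qed.

Lemma is_poly_local n f a b : is_poly n f -> (forall i, (i < n)%nat -> a i = b i) -> f a = f b.
Proof. intros H E; induction H; simpl; auto; rewrite IHis_poly1, IHis_poly2; auto. Qed.

Lemma is_poly_subst m n f h : is_poly m f -> (forall i, (i < m)%nat -> is_poly n (h i)) ->
  is_poly n (fun a => f (fun i => h i a)).
Proof.
  intros H Hh; induction H; [apply poly_const | apply Hh; auto | |].
  - apply (poly_add n (fun a => f (fun i => h i a)) (fun a => g (fun i => h i a))); auto.
  - apply (poly_mul n (fun a => f (fun i => h i a)) (fun a => g (fun i => h i a))); auto.
Qed.

Definition Gpoly n k p (a : nat -> R) : R := Gformula (aext n a) k p.

Lemma is_poly_Gpoly n k p : is_poly n (Gpoly n k p).
Proof.
  unfold Gpoly, Gformula; apply is_poly_rsum; intros u; destruct (Nat.leb u k);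
    [| apply poly_const].
  unfold walpha, pderiv; apply is_poly_sub; repeat apply poly_mul;
    apply poly_const || apply is_poly_aext.
Qed.

Lemma aext_avec n x : aext n (avec n x) = coef n x.
Proof.
  apply functional_extensionality; intros i; unfold aext, avec; nat_tests.
  - subst; rewrite coef_n; reflexivity.
  - rewrite coef_high by lia; reflexivity.
Qed.

Lemma Gcoef_Gpoly n x k p : (k < n)%nat -> Gcoef n x k p = Gpoly n k p (avec n x).
Proof. intros Hk; unfold Gpoly; rewrite aext_avec; apply Gcoef_formula; auto. Qed.

Definition upoly (g : R -> R) : Prop := exists M c, forall s, g s = peval M c s.

Lemma upoly_ext g h : upoly g -> (forall s, g s = h s) -> upoly h.
Proof. intros [M [c H]] E; exists M, c; intros; rewrite <- E; auto. Qed.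

Lemma upoly_const v : upoly (fun _ => v).
Proof. exists 1%nat, (fun _ => v); intros; unfold peval; simpl; ring. Qed.

Lemma upoly_id : upoly (fun s => s).
Proof. exists 2%nat, (fun i => match i with 1%nat => 1 | _ => 0 end); intros; unfold peval; simpl; ring. Qed.

Lemma peval_pad M K c s :
  peval M c s = peval (M + K) (fun i => if Nat.ltb i M then c i else 0) s.
Proof.
  unfold peval; rewrite (rsum_trunc M (M + K)); [| lia | intros; nat_tests; ring].
  apply rsum_ext; intros; nat_tests.
Qed.

Lemma upoly_add g h : upoly g -> upoly h -> upoly (fun s => g s + h s).
Proof.
  intros [M [c Hg]] [K [d Hh]].
  exists (M + K)%nat, (fun i => (if Nat.ltb i M then c i else 0) + (if Nat.ltb i K then d i else 0)).
  intros s; rewrite Hg, Hh, (peval_pad M K), (peval_pad K M), Nat.add_comm.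
  unfold peval; rewrite <- rsum_plus; apply rsum_ext; intros; ring.
Qed.

Lemma upoly_scal v g : upoly g -> upoly (fun s => v * g s).
Proof.
  intros [M [c Hg]]; exists M, (fun i => v * c i); intros s.
  rewrite Hg; unfold peval; rewrite <- rsum_scal_l; apply rsum_ext; intros; ring.
Qed.

Lemma upoly_pow j g : upoly g -> upoly (fun s => s ^ j * g s).
Proof.
  intros H; induction j as [|j [M [c IH]]]; [apply (upoly_ext g); auto; intros; simpl; ring |].
  exists (S M), (pshift c); intros s; rewrite <- peval_shift, <- IH; simpl; ring.
Qed.

Lemma upoly_rsum K F : (forall j, upoly (F j)) -> upoly (fun s => rsum K (fun j => F j s)).
Proof.
  intros H; induction K as [|K IH]; simpl; [apply upoly_const |].
  apply (upoly_add (fun s => rsum K (fun j => F j s)) (F K)); auto.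
Qed.

Lemma upoly_mul g h : upoly g -> upoly h -> upoly (fun s => g s * h s).
Proof.
  intros Hg [K [d Hh]].
  apply (upoly_ext (fun s => rsum K (fun j => d j * (s ^ j * g s)))).
  - apply upoly_rsum; intros j; apply upoly_scal, upoly_pow; auto.
  - intros s; rewrite Hh, Rmult_comm; unfold peval; rewrite <- rsum_scal_r.
    apply rsum_ext; intros; ring.
Qed.

Lemma upoly_restrict n f b j : is_poly n f -> upoly (fun s => f (upd b j s)).
Proof.
  intros H; induction H; [apply upoly_const | | |].
  - unfold upd; destruct (Nat.eqb i j); [apply upoly_id | apply upoly_const].
  - apply (upoly_add (fun s => f (upd b j s)) (fun s => g (upd b j s))); auto.
  - apply (upoly_mul (fun s => f (upd b j s)) (fun s => g (upd b j s))); auto.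
Qed.

Lemma upoly_zero_halfline g s0 : upoly g -> (forall s, s < s0 -> g s = 0) -> forall s, g s = 0.
Proof.
  intros [M [c Hg]] H s; rewrite Hg; unfold peval; apply rsum_zero; intros i Hi.
  rewrite (peval_zero_interval M c (s0 - 1) s0); [ring | lra | | auto].
  intros y Hy; rewrite <- Hg; apply H; lra.
Qed.

Lemma peval_lower_bound N t c : 1 <= t -> forall m, (m <= S N)%nat ->
  - rsum m (fun k => Rabs (c k)) * t ^ N <= peval m c t.
Proof.
  intros Ht m; unfold peval; induction m as [|m IH]; intros Hm; simpl; [lra |].
  specialize (IH ltac:(lia)).
  assert (H1 : t ^ m <= t ^ N) by (apply Rle_pow; lia || lra).
  assert (H2 : 0 <= t ^ m) by (apply pow_le; lra).
  assert (H3 : - Rabs (c m) * t ^ N <= c m * t ^ m).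
  { destruct (Rle_dec 0 (c m)); [rewrite Rabs_right by lra | rewrite Rabs_left by lra]; nra. }
  lra.
Qed.

Lemma monic_peval_onto n c : c (S n) = 1 -> forall v, peval (S (S n)) c 0 <= v ->
  exists t, peval (S (S n)) c t = v.
Proof.
  intros Hc v Hv.
  destruct (Req_dec (peval (S (S n)) c 0) v) as [E | Hne]; [exists 0; auto |].
  set (C := rsum (S n) (fun k => Rabs (c k))).
  assert (HC : 0 <= C).
  { unfold C; clear; induction (S n) as [|m IH]; simpl; [lra | pose proof (Rabs_pos (c m)); lra]. }
  set (T := C + Rabs v + 1).
  assert (Hv' : v < T - C) by (unfold T; pose proof (Rle_abs v); lra).
  assert (HT : 1 <= T) by (unfold T; pose proof (Rabs_pos v); lra).
  assert (Hlb := peval_lower_bound n T c HT (S n) ltac:(lia)); fold C in Hlb.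
  assert (HTn : 1 <= T ^ n) by (apply pow_R1_Rle; lra).
  assert (HPT : v < peval (S (S n)) c T).
  { unfold peval in *; change (rsum (S (S n)) ?F) with (rsum (S n) F + F (S n)); cbv beta.
    rewrite Hc; simpl pow.
    assert (0 <= (T ^ n - 1) * (T - C)) by (apply Rmult_le_pos; [lra | unfold T; pose proof (Rabs_pos v); lra]).
    nra. }
  assert (Hcont : continuity (fun t => peval (S (S n)) c t - v)).
  { intros t; apply derivable_continuous_pt; eexists.
    apply derivable_pt_lim_minus; [apply derivable_peval | apply derivable_pt_lim_const]. }
  destruct (IVT _ 0 T Hcont) as [z [_ Hz]]; try lra.
  exists z; lra.
Qed.

(* Low coefficients of (X - t) A(X), where A is monic of degree n with low coefficients a. *)
Definition mul_root n t a k : R := pshift (aext n a) k - t * aext n a k.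

Lemma is_poly_mul_root n t k : is_poly n (fun a => mul_root n t a k).
Proof.
  unfold mul_root; apply is_poly_sub; [destruct k; simpl; [apply poly_const | apply is_poly_aext] |].
  apply poly_mul; [apply poly_const | apply is_poly_aext].
Qed.

Lemma avec_push_root n x t i : (i < S n)%nat ->
  avec (S n) (upd x n t) i = mul_root n t (avec n x) i.
Proof.
  intros Hi; unfold mul_root; rewrite !aext_avec; unfold avec; nat_tests.
  assert (Hc : forall j, coef n (upd x n t) j = coef n x j)
    by (intros; apply coef_ext; intros; apply upd_other; lia).
  rewrite coef_S, upd_same; destruct i; simpl; rewrite ?Hc; reflexivity.
Qed.

(* Division by (X - t): if B is monic of degree n+1 with low coefficients b, then
   B(X) - B(t) = (X - t) q(X) with q_k = sum_m B_(k+1+m) t^m. *)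
Lemma divide_by_root n b t :
  let B := aext (S n) b in
  let q := fun k => rsum (S n - k) (fun m => B (k + 1 + m)%nat * t ^ m) in
  forall i, (i < S n)%nat -> mul_root n t q i = upd b 0 (b 0%nat - peval (S (S n)) B t) i.
Proof.
  intros B q.
  assert (Hq : forall k, (k <= n)%nat -> aext n q k = q k).
  { intros k Hk; unfold aext; nat_tests; subst.
    unfold q; replace (S n - n)%nat with 1%nat by lia; simpl.
    unfold B, aext; nat_tests; ring. }
  assert (Hrec : forall k, (k < n)%nat -> q k = B (S k) + t * q (S k)).
  { intros k Hk; unfold q; replace (S n - k)%nat with (S (S n - S k)) by lia.
    rewrite rsum_first, <- rsum_scal_l; f_equal.
    - replace (k + 1 + 0)%nat with (S k) by lia; simpl; ring.
    - apply rsum_ext; intros m _; replace (k + 1 + S m)%nat with (S k + 1 + m)%nat by lia.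
      simpl; ring. }
  intros i Hi; unfold mul_root; destruct i as [|i].
  - rewrite upd_same, Hq by lia; unfold peval, q; rewrite rsum_first, Nat.sub_0_r.
    simpl pshift; simpl pow; rewrite <- rsum_scal_l.
    assert (HB0 : B 0%nat = b 0%nat) by reflexivity.
    rewrite HB0, (rsum_ext (S n) _ (fun i => B (S i) * (t * t ^ i))) by (intros; simpl; ring).
    ring.
  - rewrite upd_other by lia; simpl pshift; rewrite !Hq, Hrec by lia.
    unfold B, aext; nat_tests; ring.
Qed.

(* Induction on n: by the
   induction hypothesis, f vanishes at the coefficients of (X - t) A(X) for every monic A;
   for s below some bound, the vector a with a_0 replaced by s has this form, since
   the monic polynomial B with coefficients a satisfies B(X) - B(t) = (X - t) q(X) and B(t)
   takes every large value; finally s |-> f (a with a_0 := s) is a polynomial in s. *)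
Lemma poly_zero_on_real_rooted n f :
  is_poly n f -> (forall x, f (avec n x) = 0) -> forall a, f a = 0.
Proof.
  revert f; induction n as [|n IH]; intros f Hf Hv a.
  - rewrite (is_poly_local 0 f a (avec 0 (fun _ => 0))) by (auto; intros; lia); auto.
  - assert (Hmul : forall t a, f (fun i => mul_root n t a i) = 0).
    { intros t; apply IH.
      - apply (is_poly_subst (S n) n f (fun i a => mul_root n t a i)); auto.
        intros; apply is_poly_mul_root.
      - intros x; rewrite <- (Hv (upd x n t)); apply is_poly_local with (n := S n); auto.
        intros; symmetry; apply avec_push_root; auto. }
    set (B := aext (S n) a).
    assert (Hlow : forall s, s < a 0%nat - peval (S (S n)) B 0 -> f (upd a 0 s) = 0).
    { intros s Hs.
      destruct (monic_peval_onto n B) with (v := a 0%nat - s) as [t Ht];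
        [unfold B, aext; nat_tests | lra |].
      rewrite <- (Hmul t (fun k => rsum (S n - k) (fun m => B (k + 1 + m)%nat * t ^ m))).
      apply is_poly_local with (n := S n); auto; intros i Hi.
      assert (Hdiv := divide_by_root n a t i Hi); cbv zeta in Hdiv; fold B in Hdiv.
      cbv beta; rewrite Hdiv, Ht; f_equal; ring. }
    rewrite <- (upd_id a 0).
    apply (upoly_zero_halfline _ _ (upoly_restrict _ f a 0 Hf) Hlow).
Qed.

Lemma aext_upd n a k t : (k < n)%nat -> aext n (upd a k t) = upd (aext n a) k t.
Proof.
  intros Hk; apply functional_extensionality; intros i; unfold aext, upd; nat_tests.
Qed.

(* Only the terms u = k - 1 and u = k of G^(kp) involve a_k, and each linearly,
   with a_(p+2) as the complementary factor. *)
Lemma walpha_upd_diag c k p u t : (u <= p)%nat ->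
  walpha (upd c k t) u (k + p + 1 - u)
  = walpha (upd c k 0) u (k + p + 1 - u)
    + t * ((if Nat.eqb (S u) k then INR k else 0) - (if Nat.eqb u k then INR (p + 2) else 0))
      * c (p + 2)%nat.
Proof.
  intros Hu; unfold walpha, pderiv.
  rewrite !(upd_other c k _ (k + p + 1 - u)), !(upd_other c k _ (k + p + 1 - u + 1)) by lia.
  nat_tests; subst.
  - replace (u + 1)%nat with (S u) by lia.
    rewrite !upd_same, !(upd_other c (S u) _ u) by lia.
    replace (S u + p + 1 - u)%nat with (p + 2)%nat by lia; ring.
  - rewrite !upd_same, !(upd_other c k _ (k + 1)) by lia.
    replace (k + p + 1 - k + 1)%nat with (p + 2)%nat by lia.
    replace (k + p + 1 - k)%nat with (p + 1)%nat by lia; ring.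
  - rewrite !(upd_other c k _ u), !(upd_other c k _ (u + 1)) by lia; ring.
Qed.

(* The slope of G^(kp) in the variable a_k, divided by a_(p+2). *)
Definition diag_slope p k : R :=
  (if Nat.leb k (p + 1) then INR k else 0) - (if Nat.leb k p then INR (p + 2) else 0).

Lemma rsum_delta_succ N k : rsum N (fun u => if Nat.eqb (S u) k then INR k else 0)
                            = if Nat.leb k N then INR k else 0.
Proof.
  induction N as [|N IH]; [simpl; nat_tests; replace k with 0%nat by lia; reflexivity |].
  change (rsum (S N) ?F) with (rsum N F + F N); cbv beta.
  rewrite IH; nat_tests; subst; ring.
Qed.

Lemma Gformula_upd_diag c k p t :
  Gformula (upd c k t) k p = Gformula (upd c k 0) k p + t * (diag_slope p k * c (p + 2)%nat).
Proof.
  unfold Gformula.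
  rewrite (rsum_ext (S p) _ (fun u =>
     (if Nat.leb u k then walpha (upd c k 0) u (k + p + 1 - u) else 0)
     + t * ((if Nat.eqb (S u) k then INR k else 0)
            - (if Nat.eqb u k then INR (p + 2) else 0)) * c (p + 2)%nat)).
  2:{ intros u Hu; destruct (Nat.leb_spec u k);
      [rewrite walpha_upd_diag by lia; reflexivity | nat_tests; ring]. }
  rewrite rsum_plus; f_equal.
  rewrite rsum_scal_r, rsum_scal_l, rsum_minus, rsum_delta_succ, rsum_delta.
  unfold diag_slope; nat_tests; ring.
Qed.

Lemma partial_Gpoly n k p a : (k < n)%nat ->
  partial (Gpoly n k p) k a = diag_slope p k * aext n a (p + 2)%nat.
Proof.
  intros Hk; apply (partial_affine _ _ _ (Gformula (upd (aext n a) k 0) k p)); intros t.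
  unfold Gpoly; rewrite aext_upd by auto; apply Gformula_upd_diag.
Qed.

(* sum_(k < N) diag_slope p k = (p+1)(p+2)/2 - (p+1)(p+2) as soon as N >= p + 2 *)
Lemma rsum_diag_slope p N : (p + 2 <= N)%nat ->
  rsum N (diag_slope p) = - (1 / 2) * INR (p + 1) * INR (p + 2).
Proof.
  intros HN; rewrite (rsum_trunc (p + 2) N) by (auto; intros; unfold diag_slope; nat_tests; ring).
  unfold diag_slope; rewrite rsum_minus.
  rewrite (rsum_ext _ _ INR) by (intros; nat_tests).
  rewrite (rsum_trunc (p + 1) (p + 2) (fun i => if Nat.leb i p then INR (p + 2) else 0))
    by (lia || (intros; nat_tests)).
  rewrite (rsum_ext (p + 1) _ (fun _ => INR (p + 2))) by (intros; nat_tests).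
  rewrite rsum_INR, rsum_const, !plus_INR; simpl; field.
Qed.

(* Any polynomial representation of the G^(kp) coincides with Gpoly, by density,
   so its divergence is sum_k diag_slope p k * a_(p+2). *)
Lemma divergence_identity n (G : nat -> nat -> (nat -> R) -> R) :
  (forall k p, (k < n)%nat -> (p < n)%nat ->
     is_poly n (G k p) /\
     forall x, GammaE n (fun z => coef n z k) (fun z => coef n z p) x = G k p (avec n x)) ->
  forall p, (p < n)%nat -> forall a : nat -> R,
    rsum n (fun k => partial (G k p) k a)
    = - (1 / 2) * INR (p + 1) * INR (p + 2) * aext n a (p + 2).
Proof.
  intros HG p Hp a.
  assert (Hunique : forall k, (k < n)%nat -> G k p = Gpoly n k p).
  { intros k Hk; destruct (HG k p Hk Hp) as [Hpoly Hval].
    apply functional_extensionality; intros b; apply Rminus_diag_uniq; revert b.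
    apply (poly_zero_on_real_rooted n (fun b => G k p b - Gpoly n k p b)); [apply (is_poly_sub n (G k p) (Gpoly n k p)); auto; apply is_poly_Gpoly |].
    intros x; rewrite <- Hval, <- Gcoef_Gpoly by auto; unfold Gcoef; ring. }
  rewrite (rsum_ext n _ (fun k => diag_slope p k * aext n a (p + 2)%nat))
    by (intros; rewrite Hunique by auto; apply partial_Gpoly; auto).
  rewrite rsum_scal_r.
  destruct (Compare_dec.le_lt_dec (p + 2) n) as [Hle | Hlt];
    [rewrite rsum_diag_slope by auto; reflexivity |].
  unfold aext; nat_tests; ring.
Qed.

(* Dividing the antisymmetric sum termwise; the diagonal terms vanish. *)
Lemma rsum_offdiag N (f : nat -> nat -> R) X Y d :
  rsum N (fun i => rsum N (fun j =>
    if Nat.eqb i j then 0 else f i j * (X ^ i * Y ^ j - X ^ j * Y ^ i) / d))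
  = rsum N (fun i => rsum N (fun j => f i j * (X ^ i * Y ^ j - X ^ j * Y ^ i))) / d.
Proof.
  unfold Rdiv; rewrite <- rsum_scal_r; apply rsum_ext; intros i _.
  rewrite <- rsum_scal_r; apply rsum_ext; intros j _; nat_tests; subst; ring.
Qed.

Theorem mainTheorem3 (n : nat) :
  (* Part 1: the polynomial identities in X, Y *)
  (forall (x : nat -> R) (X Y : R),
     GammaE n (fun z => Ppoly n z X) (fun z => Ppoly n z Y) x
     = rsum (S n) (fun i => rsum (S n) (fun j =>
         GammaE n (fun z => coef n z i) (fun z => coef n z j) x * X ^ i * Y ^ j))
   /\ (X <> Y ->
       GammaE n (fun z => Ppoly n z X) (fun z => Ppoly n z Y) x
       = (deriv1 (Ppoly n x) X * Ppoly n x Y - deriv1 (Ppoly n x) Y * Ppoly n x X)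
         / (Y - X))
   /\ (X <> Y ->
       GammaE n (fun z => Ppoly n z X) (fun z => Ppoly n z Y) x
       = rsum (S n) (fun i => rsum (S n) (fun j =>
           if Nat.eqb i j then 0
           else alpha n x i j * (X ^ i * Y ^ j - X ^ j * Y ^ i) / (Y - X)))))
  /\
  (* Part 2: the G^{kp} are polynomials in (a_0,...,a_{n-1}) ... *)
  (exists G : nat -> nat -> (nat -> R) -> R,
     (forall k p, (k < n)%nat -> (p < n)%nat ->
        is_poly n (G k p) /\
        forall x, GammaE n (fun z => coef n z k) (fun z => coef n z p) x
                  = G k p (avec n x)))
  /\
  (* ... and, regarded as such polynomials, satisfy the divergence identity *)
  (forall G : nat -> nat -> (nat -> R) -> R,
     (forall k p, (k < n)%nat -> (p < n)%nat ->
        is_poly n (G k p) /\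
        forall x, GammaE n (fun z => coef n z k) (fun z => coef n z p) x
                  = G k p (avec n x)) ->
     forall (p : nat), (p < n)%nat -> forall a : nat -> R,
       rsum n (fun k => partial (G k p) k a)
       = - (1/2) * INR (p + 1) * INR (p + 2) * aext n a (p + 2)).
Proof.
  split; [| split].
  - intros x X Y; split; [apply Gamma_Ppoly_expand |].
    assert (Hdiv : X <> Y ->
      GammaE n (fun z => Ppoly n z X) (fun z => Ppoly n z Y) x
      = (deriv1 (Ppoly n x) X * Ppoly n x Y - deriv1 (Ppoly n x) Y * Ppoly n x X) / (Y - X)).
    { intros HXY; rewrite <- Gamma_Ppoly_wronskian; field; lra. }
    split; [exact Hdiv |].
    intros HXY; rewrite Hdiv, rsum_offdiag, alpha_expand by auto; reflexivity.
  - exists (Gpoly n); intros k p Hk Hp.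
    split; [apply is_poly_Gpoly | intros x; apply Gcoef_Gpoly; auto].
  - apply divergence_identity.
Qed.
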